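(* Let $G$ be a finite free graph. Then $\phi(G)\le \chi(G)+d(G)$. Moreover, if the girth of $G$ satisfies $g(G)\ge 5$, then $\phi(G)\le \chi(G)+4$.
   Context: An independent set of $G$ is a free independent set if it is contained in at least two distinct maximal independent sets of $G$. $G$ is free if every vertex lies in some free independent set. The free chromatic number $\phi(G)$ is the minimum positive integer $t$ such that $V(G)$ can be partitioned into $t$ free independent sets. For an edge $e=uv$, $d(e)=|N(u)\cup N(v)|$ where $N(\cdot)$ is the (open) neighborhood, and $d(G)=\min\{d(e):e\in E(G)\}$. $g(G)$ is the girth (infinite for forests). *)

(* A finite simple graph is a symmetric irreflexive relation
   e : rel T on a finType T. *)
From mathcomp Require Import all_boot.
Set Implicit Arguments. Unset Strict Implicit. Unset Printing Implicit Defensive.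

Section FreeColoring.
Variables (T : finType) (e : rel T).

Definition nbhd (u : T) : {set T} := [set w | e u w].

Definition indep (S : {set T}) : bool :=
  [forall x in S, forall y in S, ~~ e x y].

Definition maxindep (S : {set T}) : bool :=
  indep S && [forall B : {set T}, (indep B && (S \subset B)) ==> (B == S)].

Definition free_indep (S : {set T}) : bool :=
  indep S &&
  [exists M1 : {set T}, exists M2 : {set T},
     [&& maxindep M1, maxindep M2, M1 != M2, S \subset M1 & S \subset M2]].

Definition free_graph : bool :=
  [forall x, exists S : {set T}, free_indep S && (x \in S)].

Definition proper_colorable (k : nat) : bool :=
  [exists f : {ffun T -> 'I_k}, forall i : 'I_k, indep [set x | f x == i]].

Definition free_colorable (k : nat) : bool :=
  [exists f : {ffun T -> 'I_k}, forall i : 'I_k, free_indep [set x | f x == i]].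

Definition chi : nat := find proper_colorable (iota 0 #|T|.+1).

Definition phi : nat :=
  find (fun t => (0 < t) && free_colorable t) (iota 0 #|T|.+2).

(* d(G) = min over edges uv of |N(u) ∪ N(v)| (default #|T| when edgeless,
   which is an upper bound of all such values) *)
Definition dG : nat :=
  \big[minn/#|T|]_(p : T * T | e p.1 p.2) #|nbhd p.1 :|: nbhd p.2|.

Definition has_cycle_len (k : nat) : bool :=
  (2 < k) && [exists s : k.-tuple T, uniq s && cycle e s].

(* girth: None = infinite (forest) *)
Definition girth : option nat :=
  if [seq k <- iota 3 #|T| | has_cycle_len k] is k :: _ then Some k else None.

Definition girth_at_least (n : nat) : bool :=
  if girth is Some g then n <= g else true.

End FreeColoring.

From mathcomp Require Import all_boot.
Set Implicit Arguments. Unset Strict Implicit. Unset Printing Implicit Defensive.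

(* An independent set S is free iff some edge has both ends outside N[S]: for
   such an edge ab, extend S + a and S + b to maximal independent sets;
   conversely, a vertex z of M1 \ M2 has a neighbour w in M2, and zw is such an
   edge. Free independent sets are closed under subsets, so covering V(G) by t
   of them gives a free t-colouring. For an edge uv, keep an optimal proper
   colouring outside N(u) ∪ N(v), whose classes then all miss uv, and cover
   N(u) ∪ N(v) by singletons (chi + d(G)) or, when g(G) >= 5 and xy is a
   suitable edge, by {x}, {y}, N(x) - y and N(y) - x (chi + 4). *)

Section FreeIndependentSets.
Variables (T : finType) (e : rel T).
Hypotheses (e_sym : symmetric e) (e_irr : irreflexive e).

Lemma indepP (S : {set T}) :
  reflect (forall x y, x \in S -> y \in S -> ~~ e x y) (indep e S).
Proof.
apply: (iffP forall_inP) => [indepS x y xS yS | indepS x xS].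
  by move/forall_inP: (indepS x xS); apply.
by apply/forall_inP => y; apply: indepS.
Qed.

Lemma indepS (A B : {set T}) : A \subset B -> indep e B -> indep e A.
Proof.
move=> sAB /indepP iB; apply/indepP => x y xA yA.
by apply: iB; apply: (subsetP sAB).
Qed.

Lemma maxindepE (M : {set T}) : maxindep e M = maxset (indep e) M.
Proof.
apply/andP/maxsetP => [[iM /forallP maxM] | [iM maxM]]; split => //.
  by move=> B iB sMB; apply/eqP; apply: (implyP (maxM B)); rewrite iB.
by apply/forallP => B; apply/implyP => /andP[iB sMB]; rewrite (maxM B iB sMB).
Qed.

Lemma indepU1 (c : T) (S : {set T}) :
  indep e S -> [disjoint S & nbhd e c] -> indep e (c |: S).
Proof.
move=> /indepP iS dS.
have cS y : y \in S -> ~~ e c y by move=> yS; have := disjointFr dS yS; rewrite inE => ->.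
apply/indepP => x y /setU1P[-> | xS] /setU1P[-> | yS]; rewrite ?e_irr ?cS //.
  by rewrite e_sym cS.
exact: iS.
Qed.

Lemma maxindep_dominating (M : {set T}) (z : T) :
  maxset (indep e) M -> z \notin M -> exists2 w, w \in M & e z w.
Proof.
move=> maxM zM; apply/exists_inP; apply: contraNT zM => /exists_inP no_nbr.
have iz : indep e (z |: M).
  apply: indepU1 (maxsetp maxM) _; rewrite disjoint_subset.
  by apply/subsetP => w wM; rewrite !inE; apply/negP => zw; apply: no_nbr; exists w.
by rewrite -(maxsetsup maxM iz (subsetUr _ _)) setU11.
Qed.

Definition avoids_edge (S : {set T}) : Prop :=
  exists a b, e a b /\ [disjoint S & nbhd e a :|: nbhd e b].

Lemma free_indepP (S : {set T}) :
  reflect (indep e S /\ avoids_edge S) (free_indep e S).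
Proof.
apply: (iffP andP) => [[iS /existsP[M1 /existsP[M2]]] | [iS [a [b [ab dS]]]]].
  case/and5P=> maxM1 maxM2 neqM sSM1 sSM2; split=> //.
  rewrite !maxindepE in maxM1 maxM2.
  have /subsetPn[z zM1 zM2] : ~~ (M1 \subset M2).
    by apply: contra neqM => sM12; rewrite (maxsetsup maxM1 (maxsetp maxM2) sM12).
  have [w wM2 zw] := maxindep_dominating maxM2 zM2.
  exists z, w; split => //; rewrite disjoint_subset; apply/subsetP => s sS.
  have /indepP iM1 := maxsetp maxM1; have /indepP iM2 := maxsetp maxM2.
  rewrite !inE negb_or (iM1 _ _ zM1 (subsetP sSM1 s sS)).
  by rewrite (iM2 _ _ wM2 (subsetP sSM2 s sS)).
split=> //.
have extend c : c \in [set a; b] -> exists2 M, maxset (indep e) M & c |: S \subset M.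
  move=> cab; have sub : nbhd e c \subset nbhd e a :|: nbhd e b.
    by apply/subsetP => x; rewrite !inE; case/set2P: cab => -> ->; rewrite ?orbT.
  by have [M] := maxset_exists (indepU1 iS (disjointWr sub dS)); exists M.
have [M1 maxM1 sM1] := extend a (set21 a b).
have [M2 maxM2 sM2] := extend b (set22 a b).
apply/existsP; exists M1; apply/existsP; exists M2.
rewrite !maxindepE maxM1 maxM2 (subset_trans (subsetUr _ _) sM1).
rewrite (subset_trans (subsetUr _ _) sM2) !andbT /=.
apply: contraTneq ab => eqM; have /indepP iM1 := maxsetp maxM1; apply: iM1.
  by apply: (subsetP sM1); rewrite setU11.
by rewrite eqM; apply: (subsetP sM2); rewrite setU11.
Qed.

Lemma free_indepS (A B : {set T}) : A \subset B -> free_indep e B -> free_indep e A.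
Proof.
move=> sAB /andP[iB /existsP[M1 /existsP[M2 /and5P[maxM1 maxM2 neqM sBM1 sBM2]]]].
rewrite /free_indep (indepS sAB iB); apply/existsP; exists M1; apply/existsP; exists M2.
by rewrite maxM1 maxM2 neqM !(subset_trans sAB).
Qed.

Lemma free_indep0 (u v : T) : e u v -> free_indep e set0.
Proof.
move=> uv; apply/free_indepP; split; last by exists u, v; rewrite -setI_eq0 set0I.
by apply/indepP => x y; rewrite inE.
Qed.

Lemma free_indep_set1 (x : T) : free_graph e -> free_indep e [set x].
Proof.
move/forallP/(_ x)/existsP=> [S /andP[freeS xS]].
by apply: free_indepS _ freeS; rewrite sub1set.
Qed.

Lemma free_graph_edge : 0 < #|T| -> free_graph e -> exists u v, e u v.
Proof.
move=> /card_gt0P[x _] /(free_indep_set1 x)/free_indepP[_ [u [v [uv _]]]].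
by exists u, v.
Qed.

(* A set of pendant vertices hanging from one vertex x is free: it misses any
   edge which misses N[x]. *)
Lemma free_indep_pendant (x : T) (S : {set T}) :
  free_graph e -> {in S, forall s, nbhd e s \subset [set x]} -> free_indep e S.
Proof.
move=> freeG pendS.
have nbr_x s w : s \in S -> e s w -> w = x.
  by move=> sS sw; apply/set1P; apply: (subsetP (pendS s sS)); rewrite inE.
have /free_indepP[_ [p [q [pq dx]]]] := free_indep_set1 x freeG.
apply/free_indepP; split.
  apply/indepP => s1 s2 s1S s2S; apply/negP => s12.
  have s1x : s1 = x by apply: (nbr_x s2) => //; rewrite e_sym.
  by move: (s12); rewrite {1}s1x (nbr_x _ _ s1S s12) e_irr.
exists p, q; split => //; rewrite disjoint_subset; apply/subsetP => s sS.
have x_off := disjointFr dx (set11 x).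
rewrite !inE negb_or; apply/andP; split; apply/negP => ws.
  by move: x_off; rewrite -(nbr_x s p sS) 1?e_sym // !inE (e_sym q) pq orbT.
by move: x_off; rewrite -(nbr_x s q sS) 1?e_sym // !inE pq.
Qed.

End FreeIndependentSets.

Section FreeChromaticNumber.
Variables (T : finType) (e : rel T).
Hypotheses (e_sym : symmetric e) (e_irr : irreflexive e).

Lemma proper_colorable_chi : proper_colorable e (chi e).
Proof.
have colorableT : proper_colorable e #|T|.
  apply/existsP; exists [ffun x => enum_rank x]; apply/forallP => i.
  apply/indepP => x y; rewrite !inE !ffunE => /eqP <- /eqP /enum_rank_inj ->.
  by rewrite e_irr.
have hasT : has (proper_colorable e) (iota 0 #|T|.+1).
  by apply/hasP; exists #|T|; rewrite // mem_iota add0n ltnSn.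
have lt_find := hasT; rewrite has_find size_iota in lt_find.
by have := nth_find 0 hasT; rewrite nth_iota.
Qed.

Lemma phi_le (t : nat) : 0 < t -> free_colorable e t -> phi e <= t.
Proof.
move=> t_gt0 colorable_t; rewrite /phi.
have [t_small | t_big] := ltnP t #|T|.+2; last first.
  by apply: leq_trans (find_size _ _) _; rewrite size_iota.
by rewrite leqNgt; apply/negP => /(before_find 0); rewrite nth_iota // t_gt0 colorable_t.
Qed.

Lemma free_colorable_cover (Bs : seq {set T}) :
  all (free_indep e) Bs -> (forall z, z \in \bigcup_(B <- Bs) B) ->
  free_colorable e (size Bs).
Proof.
move=> freeBs cover.
have covered_has z : has (fun B : {set T} => z \in B) Bs.
  by have := cover z; rewrite bigcup_seq => /bigcupP[B BBs zB]; apply/hasP; exists B.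
have covered z : find (fun B : {set T} => z \in B) Bs < size Bs by rewrite -has_find.
apply/existsP; exists [ffun z => Ordinal (covered z)]; apply/forallP => i.
have freeBi : free_indep e (nth set0 Bs i) by apply: (allP freeBs); apply: mem_nth.
apply: free_indepS _ freeBi.
apply/subsetP => z; rewrite inE ffunE => /eqP <- /=.
by have := nth_find set0 (covered_has z).
Qed.

Lemma phi_le_chi_add (Bs : seq {set T}) (u v : T) :
  e u v -> all (free_indep e) Bs -> nbhd e u :|: nbhd e v \subset \bigcup_(B <- Bs) B ->
  phi e <= chi e + size Bs.
Proof.
move=> uv freeBs coverD; set D := nbhd e u :|: nbhd e v.
have /existsP[f /forallP properf] := proper_colorable_chi.
pose Cs := [seq [set x | (x \notin D) && (f x == i)] | i <- enum 'I_(chi e)].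
have -> : chi e + size Bs = size (Cs ++ Bs) by rewrite size_cat size_map size_enum_ord.
have vBs : v \in \bigcup_(B <- Bs) B by apply: (subsetP coverD); rewrite !inE uv.
apply: phi_le.
  rewrite size_cat addn_gt0; apply/orP; right; rewrite lt0n size_eq0.
  by move: vBs; apply: contraTN => /eqP ->; rewrite big_nil inE.
apply: free_colorable_cover => [|z].
  rewrite all_cat freeBs andbT; apply/allP => _ /mapP[i _ ->].
  apply/(free_indepP e_sym e_irr); split.
    by apply: indepS (properf i); apply/subsetP => x; rewrite !inE => /andP[_].
  exists u, v; split => //; rewrite disjoint_subset.
  by apply/subsetP => x; rewrite !inE => /andP[].
rewrite big_cat inE; case: (boolP (z \in D)) => [/(subsetP coverD) -> | zD]; rewrite ?orbT //.
rewrite big_map bigcup_seq; apply/orP; left; apply/bigcupP.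
by exists (f z); rewrite ?mem_enum // inE zD eqxx.
Qed.

Lemma phi_le_chi_add_card_nbhds (u v : T) :
  free_graph e -> e u v -> phi e <= chi e + #|nbhd e u :|: nbhd e v|.
Proof.
move=> freeG uv; rewrite cardE -(size_map (fun z => [set z])).
apply: (phi_le_chi_add uv).
  by apply/allP => _ /mapP[z _ ->]; apply: free_indep_set1.
apply/subsetP => z zD; rewrite big_map bigcup_seq; apply/bigcupP.
by exists z; rewrite ?mem_enum ?set11.
Qed.

Lemma dG_edge (u0 v0 : T) :
  e u0 v0 -> exists u v, e u v /\ #|nbhd e u :|: nbhd e v| <= dG e.
Proof.
move=> uv0.
have : (dG e == #|T|) ||
    [exists p : T * T, e p.1 p.2 && (#|nbhd e p.1 :|: nbhd e p.2| == dG e)].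
  rewrite /dG; elim/big_rec: _ => [|p r ep IH]; first by rewrite eqxx.
  rewrite /minn; case: ltnP => // _.
  by apply/orP; right; apply/existsP; exists p; rewrite ep eqxx.
case/orP => [/eqP -> | /existsP[[u v] /andP[uv /eqP <-]]].
  by exists u0, v0; rewrite max_card.
by exists u, v.
Qed.

Lemma phi_le_chi_add4 (x y : T) :
  free_graph e -> e x y -> free_indep e (nbhd e x :\ y) -> free_indep e (nbhd e y :\ x) ->
  phi e <= chi e + 4.
Proof.
move=> freeG xy freeNx freeNy.
apply: (phi_le_chi_add (Bs := [:: [set x]; [set y]; nbhd e x :\ y; nbhd e y :\ x]) xy).
  by rewrite /= freeNx freeNy !free_indep_set1.
apply/subsetP => z; rewrite !big_cons big_nil !inE.
by case: (z == x); case: (z == y) => //= /orP[] ->; rewrite ?orbT.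
Qed.

End FreeChromaticNumber.

Section GirthAtLeastFive.
Variables (T : finType) (e : rel T).
Hypotheses (e_sym : symmetric e) (e_irr : irreflexive e).

Lemma girth_at_least_le (n k : nat) :
  girth_at_least e n -> has_cycle_len e k -> n <= k.
Proof.
move=> girth_n cycle_k; have /andP[k_gt2 /existsP[s /andP[uniq_s _]]] := cycle_k.
have k_le : k <= #|T| by rewrite -(size_tuple s) -(card_uniqP uniq_s) max_card.
move: girth_n; rewrite /girth_at_least /girth.
set cycles := [seq j <- iota 3 #|T| | has_cycle_len e j].
have : k \in cycles.
  by rewrite mem_filter cycle_k mem_iota k_gt2 /= addnC addnS ltnS (leq_trans k_le) ?leq_addr.
have : sorted ltn cycles by apply: sorted_filter; [exact: ltn_trans | exact: iota_ltn_sorted].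
case: cycles => [//|g cycles'] /= sorted_g /predU1P[-> // | k_in] n_le_g.
by apply: (leq_trans n_le_g); apply/ltnW/(allP (order_path_min ltn_trans sorted_g)).
Qed.

Lemma edge_neq (x y : T) : e x y -> x != y.
Proof. by apply: contraTneq => ->; rewrite e_irr. Qed.

Hypothesis girth5 : girth_at_least e 5.

Lemma no_triangle (a b c : T) : e a b -> e b c -> e c a -> False.
Proof.
move=> ab bc ca; suff /(girth_at_least_le girth5) : has_cycle_len e 3 by [].
apply/existsP; exists [tuple a; b; c].
by rewrite /= !inE negb_or ab bc ca (edge_neq ab) (edge_neq bc) eq_sym (edge_neq ca).
Qed.

Lemma no_square (a b c d : T) :
  a != c -> b != d -> e a b -> e b c -> e c d -> e d a -> False.
Proof.
move=> ac bd ab bc cd da; suff /(girth_at_least_le girth5) : has_cycle_len e 4 by [].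
apply/existsP; exists [tuple a; b; c; d].
by rewrite /= !inE !negb_or ab bc cd da (negbTE ac) (negbTE bd) (edge_neq ab) (edge_neq bc)
  (edge_neq cd) eq_sym (edge_neq da).
Qed.

(* N(x) - y misses the edge yb. *)
Lemma free_indep_nbhdD1 (x y b : T) :
  e x y -> b \in nbhd e y :\ x -> free_indep e (nbhd e x :\ y).
Proof.
move=> xy; rewrite !inE => /andP[bx yb].
apply/(free_indepP e_sym e_irr); split.
  apply/indepP => a1 a2; rewrite !inE => /andP[_ xa1] /andP[_ xa2].
  by apply/negP => a12; apply: (no_triangle xa1 a12); rewrite e_sym.
exists y, b; split => //; rewrite disjoint_subset; apply/subsetP => s.
rewrite !inE negb_or => /andP[sy xs]; apply/andP; split; apply/negP => ws.
  by apply: (no_triangle (c := y) xs); rewrite e_sym.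
by apply: (no_square (c := b) _ sy xs); rewrite 1?eq_sym 1?e_sym.
Qed.

(* If every edge has an empty side, orient an edge xy so that N(y) = {x}; then
   every a in N(x) - y is a leaf, since the edge xa has the nonempty side
   N(x) - a containing y. *)
Lemma exists_edge_free_nbhdsD1 (u v : T) :
  free_graph e -> e u v ->
  exists x y, [/\ e x y, free_indep e (nbhd e x :\ y) & free_indep e (nbhd e y :\ x)].
Proof.
move=> freeG uv.
have [/existsP[[x y] /and3P[/= xy /set0Pn[a ax] /set0Pn[b yb]]] | ] :=
  boolP [exists p : T * T, [&& e p.1 p.2, nbhd e p.1 :\ p.2 != set0
                                        & nbhd e p.2 :\ p.1 != set0]].
  exists x, y; split; [done | exact: free_indep_nbhdD1 xy yb |].
  by apply: free_indep_nbhdD1 ax; rewrite e_sym.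
move/existsPn => one_side_empty.
have pendant x y : e x y -> nbhd e y :\ x == set0 ->
    exists x y, [/\ e x y, free_indep e (nbhd e x :\ y) & free_indep e (nbhd e y :\ x)].
  move=> xy /eqP Ny; exists x, y; rewrite Ny (free_indep0 e_sym e_irr xy); split => //.
  apply: (free_indep_pendant e_sym e_irr (x := x) freeG) => a.
  rewrite !inE => /andP[ay xa].
  have Nx_a : nbhd e x :\ a != set0 by apply/set0Pn; exists y; rewrite !inE xy eq_sym ay.
  by move: (one_side_empty (x, a)); rewrite /= xa Nx_a /= negbK setD_eq0.
move: (one_side_empty (u, v)); rewrite /= uv /= negb_and !negbK.
by case/orP => [Nu | Nv]; [apply: pendant Nu; rewrite e_sym | apply: pendant Nv].
Qed.

End GirthAtLeastFive.

Theorem mainTheorem4 (T : finType) (e : rel T)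
  (e_sym : symmetric e) (e_irr : irreflexive e) (T_ne : 0 < #|T|)
  (G_free : free_graph e) :
  phi e <= chi e + dG e /\ (girth_at_least e 5 -> phi e <= chi e + 4).
Proof.
have [u [v uv]] := free_graph_edge e_sym e_irr T_ne G_free.
split.
  have [x [y [xy le_dG]]] := dG_edge uv.
  apply: leq_trans (leq_add (leqnn _) le_dG).
  exact: phi_le_chi_add_card_nbhds.
move=> girth5.
have [x [y [xy freeNx freeNy]]] := exists_edge_free_nbhdsD1 e_sym e_irr girth5 G_free uv.
exact: phi_le_chi_add4 xy freeNx freeNy.
Qed.
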